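(* Let $X$ be a compact Hausdorff space, $\mu$ a Borel regular non-atomic probability measure, $T:X\to X$ a $\mu$-preserving automorphism, $\mathcal{S}\subseteq\mathrm{GL}(d,\mathbb{R})$ an accessible subgroup, and $\mathcal{T}_{IC}$ the set of measurable $A:X\to\mathcal{S}$ with $\int_X\log^+\|A^{\pm1}\|d\mu<\infty$. Let $A\in\mathcal{T}_{IC}$, $1\le p<\infty$, $\epsilon>0$, $y\in X$ a nonperiodic point, and $\mathbb{R}^d=E\oplus F$ a nontrivial splitting over $y$. Then there exists $B\in\mathcal{T}_{IC}$ with $d_p(A,B)<\epsilon$ such that $B(y)u=v$ for some nonzero vectors $u\in E$ and $v\in A(y)F$.
   Context: Accessible: closed non-empty subgroup acting transitively on $\mathbb{R}P^{d-1}$. $d_p(A,B)=\Delta_p/(1+\Delta_p)$ where $\Delta_p(A,B)=\|A-B\|_p+\|A^{-1}-B^{-1}\|_p$ and $\|A\|_p=(\int_X\|A(x)\|^pd\mu)^{1/p}$. *)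

From HB Require Import structures.
From mathcomp Require Import all_boot all_order all_algebra.
From mathcomp Require Import all_classical all_reals all_analysis.
Set Implicit Arguments. Unset Strict Implicit. Unset Printing Implicit Defensive.
Import Order.TTheory GRing.Theory Num.Theory.
Import numFieldNormedType.Exports.
Local Open Scope classical_set_scope.
Local Open Scope ring_scope.

Definition borelType (X : ptopologicalType) := g_sigma_algebraType (@open X).

Section Defs.
Variable R : realType.

Definition eucl (d : nat) (v : 'cV[R]_d) : R := Num.sqrt (\sum_(i < d) v i ord0 ^+ 2).

Definition opnorm (d : nat) (M : 'M[R]_d) : R :=
  sup [set eucl (M *m v) | v in [set v : 'cV[R]_d | eucl v = 1]].

Definition logp (t : R) : R := Num.max 0 (ln t).

(* Accessible subgroup of GL(d,R): closed (in GL(d,R)), non-empty subgroup,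
   acting transitively on RP^{d-1}. *)
Definition accessible (d : nat) (S : set 'M[R]_d) : Prop :=
  [/\ S !=set0,
      (forall M, S M -> M \in unitmx),
      [/\ S 1%:M,
          (forall M N, S M -> S N -> S (M *m N)) &
          (forall M, S M -> S (invmx M))],
      (forall M, M \in unitmx -> closure S M -> S M) &
      (forall u v : 'cV[R]_d, u != 0 -> v != 0 ->
         exists2 g, S g & exists2 c : R, c != 0 & g *m u = c *: v)].

Variables (X : ptopologicalType) (mu : probability (borelType X) R).

Definition borel_regular : Prop :=
  forall A : set (borelType X), measurable A ->
    mu A = ereal_inf [set mu (U : set (borelType X)) | U in [set U : set X | open U /\ A `<=` U]]
 /\ mu A = ereal_sup [set mu (K : set (borelType X)) | K in [set K : set X | closed K /\ K `<=` A]].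

Definition non_atomic : Prop :=
  forall A : set (borelType X), measurable A -> (0 < mu A)%E ->
    exists2 B : set (borelType X), measurable B /\ B `<=` A & (0 < mu B < mu A)%E.

Definition mp_automorphism (T : borelType X -> borelType X) : Prop :=
  [/\ measurable_fun setT T,
      exists2 Tinv : borelType X -> borelType X,
        measurable_fun setT Tinv & cancel T Tinv /\ cancel Tinv T &
      forall A : set (borelType X), measurable A -> mu (T @^-1` A) = mu A].

Definition nonperiodic (T : X -> X) (y : X) : Prop :=
  forall n : nat, (0 < n)%N -> iter n T y <> y.

Definition T_IC (d : nat) (S : set 'M[R]_d) (A : borelType X -> 'M[R]_d) : Prop :=
  [/\ (forall x, S (A x)),
      (forall i j, measurable_fun setT (fun x => A x i j)),
      (\int[mu]_x (logp (opnorm (A x)))%:E < +oo)%E &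
      (\int[mu]_x (logp (opnorm (invmx (A x))))%:E < +oo)%E].

Definition Delta_p (d : nat) (p : R) (A B : borelType X -> 'M[R]_d) : \bar R :=
  (Lnorm mu p%:E (fun x => (opnorm (A x - B x))%:E) +
   Lnorm mu p%:E (fun x => (opnorm (invmx (A x) - invmx (B x)))%:E))%E.

Definition dist_p (d : nat) (p : R) (A B : borelType X -> 'M[R]_d) : R :=
  match Delta_p p A B with
  | r%:E => r / (1 + r)
  | _ => 1
  end.

End Defs.

(** A non-atomic measure on a Hausdorff space gives every point measure
    zero, so redefining [A] at the single point [y] preserves membership in
    [T_IC] and yields [dist_p A B = 0].  By transitivity of [S] on lines, the
    new value [B y] in [S] can send a nonzero vector of [E] onto the line
    through [A y w], for a nonzero [w] of [F]. *)

From HB Require Import structures.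
From mathcomp Require Import all_boot all_order all_algebra.
From mathcomp Require Import all_classical all_reals all_analysis.
Import Order.TTheory GRing.Theory Num.Theory.
Local Open Scope classical_set_scope.
Local Open Scope ring_scope.

Section integral_off_null.
Local Open Scope ereal_scope.
Context d (T : measurableType d) (R : realType) (mu : {measure set T -> \bar R}).
Import HBNNSimple.
Variable N : set T.
Hypotheses (mN : measurable N) (N0 : mu N = 0).

(* No measurability of [f] or [g] is assumed: the integral of a nonnegative
   function is the supremum of the integrals of the simple functions below it,
   and the part of such a simple function supported on [N] has integral 0. *)
Lemma ge0_le_integral_off_null (f g : T -> \bar R) :
  (forall x, 0 <= f x) -> (forall x, 0 <= g x) ->
  (forall x, ~ N x -> f x <= g x) ->
  \int[mu]_x f x <= \int[mu]_x g x.
Proof.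
move=> f0 g0 fg; rewrite !ge0_integralTE//.
apply: ge_ereal_sup => _ [h hf <-].
pose hC := proj_nnsfun h (measurableC mN).
pose hN := proj_nnsfun h mN.
have -> : sintegral mu h = sintegral mu hC + sintegral mu hN.
  rewrite -sintegralD; apply: eq_sintegral => x /=.
  rewrite !measurable_realfun.mindicE in_setC.
  by case: (boolP (x \in N)) => _ /=; rewrite ?(mulr0, mulr1, add0r, addr0).
have -> : sintegral mu hN = 0.
  rewrite sintegralET; apply: fsbig1 => r _.
  have [->|r0] := eqVneq r 0%R; first by rewrite mul0e.
  rewrite (@subset_measure0 _ _ _ mu _ N) ?mule0 // => x /=.
  rewrite measurable_realfun.mindicE; case: (boolP (x \in N)) => [/set_mem//|_].
  by rewrite mulr0 => /esym/eqP; rewrite (negPf r0).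
rewrite adde0; apply: ereal_sup_ubound; exists hC => // x.
rewrite /= measurable_realfun.mindicE in_setC.
case: (boolP (x \in N)) => /= [_|Nx]; first by rewrite mulr0; exact: g0.
rewrite mulr1; apply: le_trans (hf x) (fg x _).
by move=> /mem_set; apply/negP.
Qed.

Lemma ge0_eq_integral_off_null (f g : T -> \bar R) :
  (forall x, 0 <= f x) -> (forall x, 0 <= g x) ->
  (forall x, ~ N x -> f x = g x) ->
  \int[mu]_x f x = \int[mu]_x g x.
Proof.
move=> f0 g0 fg; apply/eqP; rewrite eq_le.
by rewrite !ge0_le_integral_off_null// => x /fg ->.
Qed.

Lemma Lnorm_eq0_off_null (p : R) (f : T -> \bar R) : p != 0%R ->
  (forall x, ~ N x -> f x = 0) -> Lnorm mu p%:E f = 0.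
Proof.
move=> p0 fN; rewrite unlock /Lnorm.
rewrite (@ge0_eq_integral_off_null _ (cst 0)).
- by rewrite integral0 poweR0r // invr_neq0.
- by move=> x; exact: poweR_ge0.
- by [].
- by move=> x /fN ->; rewrite abse0 poweR0r.
Qed.

End integral_off_null.

Lemma eucl0 (R : realType) d : eucl (0 : 'cV[R]_d) = 0.
Proof. by rewrite /eucl big1 ?sqrtr0 // => i _; rewrite mxE expr0n. Qed.

Lemma opnorm0 (R : realType) d : opnorm (0 : 'M[R]_d) = 0.
Proof.
rewrite /opnorm; have [[v v1]|no_unit] := pselect (exists v : 'cV[R]_d, eucl v = 1).
  rewrite (_ : [set _ | _ in _] = [set 0]) ?sup1 //.
  apply/seteqP; split => [_ [w _ <-]|_ ->]; first by rewrite /= mul0mx eucl0.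
  by exists v => //; rewrite mul0mx eucl0.
rewrite (_ : [set _ | _ in _] = set0) ?sup0 //.
by apply/seteqP; split => [z [w w1 _]|//]; apply: no_unit; exists w.
Qed.

Lemma hausdorff_set1_measurable {X : ptopologicalType} (y : X) :
  hausdorff_space X -> measurable ([set y] : set (borelType X)).
Proof.
move=> hX; rewrite -[[set y]]setCK; apply: measurableC; apply: sub_sigma_algebra.
exact: closed_openC (compact_closed hX (@compact_set1 X y)).
Qed.

Section point_modification.
Context {R : realType} {X : ptopologicalType} {mu : probability (borelType X) R}.

Lemma non_atomic_set1 (y : X) : non_atomic mu ->
  measurable ([set y] : set (borelType X)) -> mu ([set y] : set (borelType X)) = 0%E.
Proof.
move=> natom my; apply/eqP; rewrite eq_le measure_ge0 andbT leNgt.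
apply/negP => /(natom _ my) [B [_ /subset_set1[->|->]]].
  by rewrite measure0 ltxx.
by rewrite ltxx andbF.
Qed.

Context {d : nat} {A : borelType X -> 'M[R]_d} {N : set (borelType X)}.
Hypotheses (mN : measurable N) (N0 : mu N = 0%E).

Lemma T_IC_eq_off_null {S : set 'M[R]_d} {B : borelType X -> 'M[R]_d} :
  (forall x, S (B x)) -> (forall i j, measurable_fun setT (fun x => B x i j)) ->
  (forall x, ~ N x -> B x = A x) -> T_IC mu S A -> T_IC mu S B.
Proof.
move=> SB mB BA [_ _ iA iAV].
have logp_ge0 (t : R) : (0 <= (logp t)%:E)%E by rewrite lee_fin /logp le_max lexx.
have integral_BA (h : 'M[R]_d -> 'M[R]_d) :
    (\int[mu]_x (logp (opnorm (h (B x))))%:E = \int[mu]_x (logp (opnorm (h (A x))))%:E)%E.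
  by apply: (@ge0_eq_integral_off_null _ _ _ mu N mN N0) => // x /BA ->.
split; [exact: SB | exact: mB | rewrite (integral_BA id); exact: iA |].
by rewrite integral_BA; exact: iAV.
Qed.

Lemma dist_p_eq0_off_null {p : R} {B : borelType X -> 'M[R]_d} : p != 0 ->
  (forall x, ~ N x -> B x = A x) -> dist_p mu p A B = 0.
Proof.
move=> p0 BA; rewrite /dist_p /Delta_p.
rewrite !(@Lnorm_eq0_off_null _ _ _ mu N mN N0 p _ p0) ?adde0 /= ?mul0r // => x /BA ->.
- by rewrite subrr opnorm0.
- by rewrite subrr opnorm0.
Qed.

End point_modification.

Lemma accessible_maps_into_image {R : realType} {d : nat} {S : set 'M[R]_d}
    {M : 'M[R]_d} {E F : {vspace 'cV[R]_d}} :
  accessible S -> S M -> E != 0%VS -> F != 0%VS ->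
  exists2 g, S g & exists u v : 'cV[R]_d,
    [/\ u != 0, v != 0, u \in E, (exists2 w, w \in F & v = M *m w) & g *m u = v].
Proof.
move=> [_ Sunit _ _ Strans] SM E0 F0.
have u0 : vpick E != 0 by rewrite vpick0.
have Mw0 : M *m vpick F != 0.
  apply: contraNneq F0 => Mw0; rewrite -vpick0.
  by rewrite -(mulKmx (Sunit _ SM) (vpick F)) Mw0 mulmx0.
have [g Sg [c c0 gu]] := Strans _ _ u0 Mw0.
exists g => //; exists (vpick E), (c *: (M *m vpick F)); split => //.
- by rewrite scaler_eq0 negb_or c0.
- exact: memv_pick.
- by exists (c *: vpick F); [rewrite memvZ ?memv_pick | rewrite scalemxAr].
Qed.

Theorem lemma2p9 (R : realType) (X : ptopologicalType)
  (mu : probability (borelType X) R) (T : borelType X -> borelType X)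
  (d : nat) (S : set 'M[R]_d) (A : borelType X -> 'M[R]_d)
  (p eps : R) (y : X) (E F : {vspace 'cV[R]_d}) :
  compact [set: X] -> hausdorff_space X ->
  borel_regular mu -> non_atomic mu ->
  mp_automorphism mu T ->
  accessible S ->
  T_IC mu S A ->
  1 <= p -> 0 < eps ->
  nonperiodic T y ->
  (E + F)%VS = fullv -> directv (E + F) -> E != 0%VS -> F != 0%VS ->
  exists2 B : borelType X -> 'M[R]_d, T_IC mu S B /\ dist_p mu p A B < eps &
    exists u v : 'cV[R]_d,
      [/\ u != 0, v != 0, u \in E, (exists2 w, w \in F & v = A y *m w) &
          B y *m u = v].
Proof.
move=> _ hX _ natom _ accS AIC p1 eps0 _ _ _ E0 F0.
have my := hausdorff_set1_measurable y hX.
have my0 := non_atomic_set1 y natom my.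
have [SA mA _ _] := AIC.
have [g Sg guv] := accessible_maps_into_image accS (SA y) E0 F0.
pose B (x : borelType X) := if x == y then g else A x.
have BA x : ~ [set y] x -> B x = A x by move=> /eqP xy; rewrite /B ifN.
have meq_y : measurable_fun setT (fun x : borelType X => x == y).
  apply: (measurable_fun_bool true); rewrite setTI (_ : _ @^-1` _ = [set y]) //.
  by apply/seteqP; split => x /= => [/eqP|->] //; rewrite eqxx.
exists B; last by rewrite /B eqxx.
have p0 : p != 0 by rewrite gt_eqF // (lt_le_trans ltr01 p1).
split; last by rewrite (dist_p_eq0_off_null my my0 p0 BA).
apply: (T_IC_eq_off_null my my0 _ _ BA AIC) => [x|i j]; first by rewrite /B; case: ifP.
rewrite (_ : (fun x => B x i j) = fun x => if x == y then g i j else A x i j).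
  exact: measurable_fun_ifT meq_y (measurable_cst _) (mA i j).
by apply/funext => x; rewrite /B; case: ifP.
Qed.
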